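(* Let $\mathbf{A}$ be an additive category, let $T: \mathbf{A} \times \mathbf{A} \to \mathcal{A}(\mathbf{A})$ be a bilinear functor with extension $\otimes := \widehat{T}$, let $\mathrm{Ass}_{a,b,c}: a\otimes(b\otimes c) \xrightarrow{\sim} (a\otimes b)\otimes c$ be an isomorphism natural in $a,b,c\in\mathbf{A}$, let $1 \in \mathcal{A}(\mathbf{A})$, and let $\lambda_a: 1\otimes a \xrightarrow{\sim} a$, $\varrho_a: a\otimes 1 \xrightarrow{\sim} a$ be isomorphisms natural in $a\in\mathbf{A}$. Denote the extensions by $\widehat{\mathrm{Ass}}$, $\widehat\lambda$, $\widehat\varrho$. Then $\widehat\lambda$ and $\widehat\varrho$ satisfy the triangle identity \[ (\widehat\varrho_A \otimes \mathrm{id}_B) \circ \widehat{\mathrm{Ass}}_{A,1,B} = \mathrm{id}_A \otimes \widehat\lambda_B : A\otimes(1\otimes B) \to A\otimes B \] for all $A,B\in\mathcal{A}(\mathbf{A})$ if and only if this identity holds for all $A, B \in \mathbf{A}$.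
   Context: The Freyd category $\mathcal{A}(\mathbf{A})$: objects are morphisms $\rho_a: r_a \to a$ of $\mathbf{A}$, written $(a \xleftarrow{\rho_a} r_a)$; morphisms $(a \xleftarrow{\rho_a} r_a) \to (b \xleftarrow{\rho_b} r_b)$ are morphisms $\alpha: a\to b$ of $\mathbf{A}$ with $\alpha\circ\rho_a = \rho_b\circ\omega$ for some $\omega$, modulo those of the form $\rho_b\circ\lambda$; it is additive with cokernels. Objects $a\in\mathbf{A}$ are regarded as $(a\leftarrow 0)\in\mathcal{A}(\mathbf{A})$ via the embedding $\mathrm{emb}$. For a multilinear (componentwise additive) $F: \prod_i \mathbf{A}_i \to \mathbf{B}$ into an additive category with cokernels, $\widehat F(A_1,\dots,A_n) = \operatorname{cok}\big(\bigoplus_j F(a_1,\dots,r_{a_j},\dots,a_n) \to F(a_1,\dots,a_n)\big)$ defines the right exact (componentwise cokernel-preserving) multilinear extension with $\widehat F\circ\mathrm{emb}\cong F$; restriction along $\mathrm{emb}$ is an equivalence between right exact multilinear functors on $\prod_i\mathcal{A}(\mathbf{A}_i)$ and multilinear functors on $\prod_i\mathbf{A}_i$. The extensions $\widehat{\mathrm{Ass}}$, $\widehat\lambda$, $\widehat\varrho$ are the unique natural transformations between the corresponding right exact multilinear functors on $\mathcal{A}(\mathbf{A})$ (namely $A\otimes(B\otimes C) \Rightarrow (A\otimes B)\otimes C$, $1\otimes A \Rightarrow A$, $A\otimes 1\Rightarrow A$) whose restrictions along $\mathrm{emb}$ are $\mathrm{Ass}$, $\lambda$, $\varrho$. *)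

From mathcomp Require Import all_boot all_algebra.
Set Implicit Arguments.
Unset Strict Implicit.
Unset Printing Implicit Defensive.
Import GRing.Theory.
Local Open Scope ring_scope.

Record addCat := AddCat {
  Ob : Type;
  Hom : Ob -> Ob -> zmodType;
  idm : forall a, Hom a a;
  comp : forall a b c, Hom b c -> Hom a b -> Hom a c;
  compA : forall a b c d (f : Hom c d) (g : Hom b c) (h : Hom a b),
      comp f (comp g h) = comp (comp f g) h;
  comp1m : forall a b (f : Hom a b), comp (idm b) f = f;
  compm1 : forall a b (f : Hom a b), comp f (idm a) = f;
  compDl : forall a b c (f f' : Hom b c) (g : Hom a b),
      comp (f + f') g = comp f g + comp f' g;
  compDr : forall a b c (f : Hom b c) (g g' : Hom a b),
      comp f (g + g') = comp f g + comp f g';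
  zobj : Ob;
  zobj_init : forall a (f : Hom zobj a), f = 0;
  zobj_term : forall a (f : Hom a zobj), f = 0;
  bip : Ob -> Ob -> Ob;
  bi1 : forall a b, Hom a (bip a b);
  bi2 : forall a b, Hom b (bip a b);
  bp1 : forall a b, Hom (bip a b) a;
  bp2 : forall a b, Hom (bip a b) b;
  bip_11 : forall a b, comp (bp1 a b) (bi1 a b) = idm a;
  bip_22 : forall a b, comp (bp2 a b) (bi2 a b) = idm b;
  bip_12 : forall a b, comp (bp1 a b) (bi2 a b) = 0;
  bip_21 : forall a b, comp (bp2 a b) (bi1 a b) = 0;
  bip_id : forall a b,
      comp (bi1 a b) (bp1 a b) + comp (bi2 a b) (bp2 a b) = idm (bip a b)
}.

Arguments Hom {A} : rename.
Arguments idm {A} : rename.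
Arguments comp {A a b c} : rename.
Arguments zobj {A} : rename.

Section Freyd.
Variable A : addCat.

Lemma comp0l (a b c : Ob A) (g : Hom a b) : comp (0 : Hom b c) g = 0.
Proof.
apply: (addrI (comp (0 : Hom b c) g)).
by rewrite -compDl !addr0.
Qed.

Lemma comp0r (a b c : Ob A) (f : Hom b c) : comp f (0 : Hom a b) = 0.
Proof.
apply: (addrI (comp f (0 : Hom a b))).
by rewrite -compDr !addr0.
Qed.

(* Objects of the Freyd category: morphisms rho : r -> a of A. *)
Record fobj := FObj { fo : Ob A; fr : Ob A; frho : Hom fr fo }.

(* Morphisms: representatives alpha with alpha o rho_X = rho_Y o omega ... *)
Definition FHom (X Y : fobj) :=
  { al : Hom (fo X) (fo Y) |
    exists om : Hom (fr X) (fr Y), comp al (frho X) = comp (frho Y) om }.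

(* ... modulo those of the form rho_Y o lambda. *)
Definition feq (X Y : fobj) (f g : FHom X Y) : Prop :=
  exists l : Hom (fo X) (fr Y), proj1_sig f - proj1_sig g = comp (frho Y) l.

Lemma fcomp_ok (X Y Z : fobj) (g : FHom Y Z) (f : FHom X Y) :
  exists om : Hom (fr X) (fr Z),
    comp (comp (proj1_sig g) (proj1_sig f)) (frho X) = comp (frho Z) om.
Proof.
case: g => g [w2 Hg]; case: f => f [w1 Hf] /=.
exists (comp w2 w1).
by rewrite -compA Hf compA Hg -compA.
Qed.

Definition fcomp (X Y Z : fobj) (g : FHom Y Z) (f : FHom X Y) : FHom X Z :=
  exist _ (comp (proj1_sig g) (proj1_sig f)) (fcomp_ok g f).

Lemma fid_ok (X : fobj) :
  exists om : Hom (fr X) (fr X), comp (idm (fo X)) (frho X) = comp (frho X) om.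
Proof. by exists (idm (fr X)); rewrite comp1m compm1. Qed.

Definition fid (X : fobj) : FHom X X := exist _ (idm (fo X)) (fid_ok X).

Lemma fzero_ok (X Y : fobj) :
  exists om : Hom (fr X) (fr Y), comp (0 : Hom (fo X) (fo Y)) (frho X) = comp (frho Y) om.
Proof. by exists 0; rewrite comp0l comp0r. Qed.

Definition fzero (X Y : fobj) : FHom X Y := exist _ 0 (fzero_ok X Y).

Lemma fadd_ok (X Y : fobj) (f g : FHom X Y) :
  exists om : Hom (fr X) (fr Y),
    comp (proj1_sig f + proj1_sig g) (frho X) = comp (frho Y) om.
Proof.
case: f => f [w1 Hf]; case: g => g [w2 Hg] /=.
by exists (w1 + w2); rewrite compDl compDr Hf Hg.
Qed.

Definition fadd (X Y : fobj) (f g : FHom X Y) : FHom X Y :=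
  exist _ (proj1_sig f + proj1_sig g) (fadd_ok f g).

Definition emb (a : Ob A) : fobj := FObj (0 : Hom (@zobj A) a).

Lemma embm_ok (a b : Ob A) (f : Hom a b) :
  exists om : Hom (fr (emb a)) (fr (emb b)),
    comp f (frho (emb a)) = comp (frho (emb b)) om.
Proof. by exists 0; rewrite /= comp0l comp0r. Qed.

Definition embm (a b : Ob A) (f : Hom a b) : FHom (emb a) (emb b) :=
  exist _ f (embm_ok f).

Definition fiso (X Y : fobj) (f : FHom X Y) : Prop :=
  exists g : FHom Y X, feq (fcomp g f) (fid X) /\ feq (fcomp f g) (fid Y).

Definition is_cokernel (X Y C : fobj) (f : FHom X Y) (c : FHom Y C) : Prop :=
  feq (fcomp c f) (fzero X C) /\
  forall (Z : fobj) (g : FHom Y Z), feq (fcomp g f) (fzero X Z) ->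
    exists h : FHom C Z, feq (fcomp h c) g /\
      forall h' : FHom C Z, feq (fcomp h' c) g -> feq h' h.

Record bifunA := BifunA {
  T_ob : Ob A -> Ob A -> fobj;
  T_mor : forall a a' b b', Hom a a' -> Hom b b' -> FHom (T_ob a b) (T_ob a' b')
}.

Definition bilinearA (T : bifunA) : Prop :=
  (forall a b, feq (T_mor T (idm a) (idm b)) (fid (T_ob T a b))) /\
  (forall a a' a'' b b' b'' (f : Hom a a') (f' : Hom a' a'')
          (g : Hom b b') (g' : Hom b' b''),
      feq (T_mor T (comp f' f) (comp g' g))
          (fcomp (T_mor T f' g') (T_mor T f g))) /\
  (forall a a' b b' (f f' : Hom a a') (g : Hom b b'),
      feq (T_mor T (f + f') g) (fadd (T_mor T f g) (T_mor T f' g))) /\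
  (forall a a' b b' (f : Hom a a') (g g' : Hom b b'),
      feq (T_mor T f (g + g')) (fadd (T_mor T f g) (T_mor T f g'))).

Record fbifun := FBifun {
  E_ob : fobj -> fobj -> fobj;
  E_mor : forall X X' Y Y', FHom X X' -> FHom Y Y' ->
            FHom (E_ob X Y) (E_ob X' Y')
}.

Definition bilinearF (E : fbifun) : Prop :=
  (forall X X' Y Y' (f f' : FHom X X') (g g' : FHom Y Y'),
      feq f f' -> feq g g' -> feq (E_mor E f g) (E_mor E f' g')) /\
  (forall X Y, feq (E_mor E (fid X) (fid Y)) (fid (E_ob E X Y))) /\
  (forall X X' X'' Y Y' Y'' (f : FHom X X') (f' : FHom X' X'')
          (g : FHom Y Y') (g' : FHom Y' Y''),
      feq (E_mor E (fcomp f' f) (fcomp g' g))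
          (fcomp (E_mor E f' g') (E_mor E f g))) /\
  (forall X X' Y Y' (f f' : FHom X X') (g : FHom Y Y'),
      feq (E_mor E (fadd f f') g) (fadd (E_mor E f g) (E_mor E f' g))) /\
  (forall X X' Y Y' (f : FHom X X') (g g' : FHom Y Y'),
      feq (E_mor E f (fadd g g')) (fadd (E_mor E f g) (E_mor E f g'))).

Definition right_exactF (E : fbifun) : Prop :=
  (forall (B X Y C : fobj) (f : FHom X Y) (c : FHom Y C),
      is_cokernel f c -> is_cokernel (E_mor E f (fid B)) (E_mor E c (fid B))) /\
  (forall (B X Y C : fobj) (f : FHom X Y) (c : FHom Y C),
      is_cokernel f c -> is_cokernel (E_mor E (fid B) f) (E_mor E (fid B) c)).

(* E is (a choice of) the right exact bilinear extension \widehat T of T: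
   E is right exact, bilinear, and E o (emb x emb) is naturally isomorphic
   to T.  (Such E is unique up to natural isomorphism.) *)
Definition is_extension (T : bifunA) (E : fbifun) : Prop :=
  bilinearF E /\ right_exactF E /\
  exists phi : forall a b, FHom (E_ob E (emb a) (emb b)) (T_ob T a b),
    (forall a b, fiso (phi a b)) /\
    (forall a a' b b' (f : Hom a a') (g : Hom b b'),
        feq (fcomp (phi a' b') (E_mor E (embm f) (embm g)))
            (fcomp (T_mor T f g) (phi a b))).

Section Data.
Variable E : fbifun.
Local Notation "X ⊗ Y" := (E_ob E X Y) (at level 40, left associativity).
Local Notation "f ⊗m g" := (E_mor E f g) (at level 40, left associativity).

Definition assA_type :=
  forall a b c : Ob A, FHom (emb a ⊗ (emb b ⊗ emb c)) ((emb a ⊗ emb b) ⊗ emb c).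

Definition nat_iso_assA (Ass : assA_type) : Prop :=
  (forall a b c, fiso (Ass a b c)) /\
  (forall a a' b b' c c' (f : Hom a a') (g : Hom b b') (h : Hom c c'),
     feq (fcomp (Ass a' b' c') (embm f ⊗m (embm g ⊗m embm h)))
         (fcomp ((embm f ⊗m embm g) ⊗m embm h) (Ass a b c))).

Definition lamA_type (one : fobj) := forall a : Ob A, FHom (one ⊗ emb a) (emb a).
Definition rhoA_type (one : fobj) := forall a : Ob A, FHom (emb a ⊗ one) (emb a).

Definition nat_iso_lamA (one : fobj) (lam : lamA_type one) : Prop :=
  (forall a, fiso (lam a)) /\
  (forall a a' (f : Hom a a'),
     feq (fcomp (lam a') (fid one ⊗m embm f)) (fcomp (embm f) (lam a))).

Definition nat_iso_rhoA (one : fobj) (rho : rhoA_type one) : Prop :=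
  (forall a, fiso (rho a)) /\
  (forall a a' (f : Hom a a'),
     feq (fcomp (rho a') (embm f ⊗m fid one)) (fcomp (embm f) (rho a))).

Definition ass_type := forall X Y Z : fobj, FHom (X ⊗ (Y ⊗ Z)) ((X ⊗ Y) ⊗ Z).
Definition lam_type (one : fobj) := forall X : fobj, FHom (one ⊗ X) X.
Definition rho_type (one : fobj) := forall X : fobj, FHom (X ⊗ one) X.

Definition natural_ass (Ass : ass_type) : Prop :=
  forall X X' Y Y' Z Z' (f : FHom X X') (g : FHom Y Y') (h : FHom Z Z'),
    feq (fcomp (Ass X' Y' Z') (f ⊗m (g ⊗m h)))
        (fcomp ((f ⊗m g) ⊗m h) (Ass X Y Z)).

Definition natural_lam (one : fobj) (lam : lam_type one) : Prop :=
  forall X X' (f : FHom X X'),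
    feq (fcomp (lam X') (fid one ⊗m f)) (fcomp f (lam X)).

Definition natural_rho (one : fobj) (rho : rho_type one) : Prop :=
  forall X X' (f : FHom X X'),
    feq (fcomp (rho X') (f ⊗m fid one)) (fcomp f (rho X)).

Definition is_ext_ass (Ass : assA_type) (Assh : ass_type) : Prop :=
  natural_ass Assh /\
  forall a b c, feq (Assh (emb a) (emb b) (emb c)) (Ass a b c).

Definition is_ext_lam (one : fobj) (lam : lamA_type one) (lamh : lam_type one)
  : Prop := natural_lam lamh /\ forall a, feq (lamh (emb a)) (lam a).

Definition is_ext_rho (one : fobj) (rho : rhoA_type one) (rhoh : rho_type one)
  : Prop := natural_rho rhoh /\ forall a, feq (rhoh (emb a)) (rho a).

Definition triangle (one : fobj) (Assh : ass_type) (lamh : lam_type one)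
  (rhoh : rho_type one) (X Y : fobj) : Prop :=
  feq (fcomp (rhoh X ⊗m fid Y) (Assh X one Y)) (fid X ⊗m lamh Y).

End Data.
End Freyd.

From mathcomp Require Import all_boot all_algebra.
From Stdlib Require Import Setoid Morphisms.

(* Every object X of the Freyd category is the cokernel of emb (frho X), and a
   right exact bilinear functor turns such presentations into epimorphisms.
   Both sides of the triangle identity are natural transformations from
   X ⊗ (1 ⊗ Y) to X ⊗ Y, so by naturality they agree at (X, Y) after
   precomposition with the epimorphism obtained from the presentations of X
   and Y; there they agree by the identity on objects of A. *)

Set Implicit Arguments.
Unset Strict Implicit.
Unset Printing Implicit Defensive.
Import GRing.Theory.
Local Open Scope ring_scope.

Section FreydCategory.
Variable A : addCat.
Implicit Types X Y Z W : fobj A.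

Lemma compNr (a b c : Ob A) (f : Hom b c) (g : Hom a b) :
  comp f (- g) = - comp f g.
Proof. by apply/eqP; rewrite -addr_eq0 -compDr addNr comp0r. Qed.

Lemma compBr (a b c : Ob A) (f : Hom b c) (g g' : Hom a b) :
  comp f (g - g') = comp f g - comp f g'.
Proof. by rewrite compDr compNr. Qed.

Lemma compBl (a b c : Ob A) (f f' : Hom b c) (g : Hom a b) :
  comp (f - f') g = comp f g - comp f' g.
Proof. by apply: (addIr (comp f' g)); rewrite -compDl !subrK. Qed.

Lemma val_feq X Y (f g : FHom X Y) : proj1_sig f = proj1_sig g -> feq f g.
Proof. by move=> e; exists 0; rewrite e subrr comp0r. Qed.

#[export] Instance feq_equiv X Y : Equivalence (@feq A X Y).
Proof.
split=> [f | f g [l e] | f g h [l1 e1] [l2 e2]]; first exact: val_feq.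
  by exists (- l); rewrite compNr -e opprB.
by exists (l1 + l2); rewrite compDr -e1 -e2 addrA subrK.
Qed.

#[local] Hint Extern 0 (feq _ _) => reflexivity : core.

#[export] Instance fcomp_proper X Y Z :
  Proper (@feq A Y Z ==> @feq A X Y ==> @feq A X Z) (@fcomp A X Y Z).
Proof.
move=> g g' [l e] f f' [k d]; transitivity (fcomp g f').
  case: g {e} => g [om Hg]; exists (comp om k) => /=.
  by rewrite -compBr d !compA Hg.
by exists (comp l (proj1_sig f')); rewrite /= -compBl e compA.
Qed.

Lemma fcompA W X Y Z (h : FHom Y Z) (g : FHom X Y) (f : FHom W X) :
  feq (fcomp h (fcomp g f)) (fcomp (fcomp h g) f).
Proof. by apply: val_feq; rewrite /= compA. Qed.

Lemma fcomp1m X Y (f : FHom X Y) : feq (fcomp (fid Y) f) f.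
Proof. by apply: val_feq; rewrite /= comp1m. Qed.

Lemma fcompm1 X Y (f : FHom X Y) : feq (fcomp f (fid X)) f.
Proof. by apply: val_feq; rewrite /= compm1. Qed.

Lemma fcompm0 X Y Z (u : FHom Y Z) : feq (fcomp u (fzero X Y)) (fzero X Z).
Proof. by apply: val_feq; rewrite /= comp0r. Qed.

Definition fepi X Y (e : FHom X Y) :=
  forall Z (u v : FHom Y Z), feq (fcomp u e) (fcomp v e) -> feq u v.

Lemma fepi_comp X Y Z (e1 : FHom Y Z) (e2 : FHom X Y) :
  fepi e1 -> fepi e2 -> fepi (fcomp e1 e2).
Proof. by move=> epi1 epi2 W u v; rewrite !fcompA => /epi2 /epi1. Qed.

Lemma fepi_feq X Y (e e' : FHom X Y) : feq e e' -> fepi e' -> fepi e.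
Proof. by move=> ee' epi' Z u v; rewrite ee'; apply: epi'. Qed.

Lemma cokernel_epi X Y C (f : FHom X Y) (c : FHom Y C) :
  is_cokernel f c -> fepi c.
Proof.
case=> cf0 univ Z u v uv.
have ucf0 : feq (fcomp (fcomp u c) f) (fzero X Z).
  by rewrite -fcompA cf0 fcompm0.
have [h [_ uniq_h]] := univ Z _ ucf0.
by rewrite (uniq_h u) // (uniq_h v) // uv.
Qed.

Lemma fproj_ok X :
  exists om : Hom (fr (emb (fo X))) (fr X),
    comp (idm (fo X)) (frho (emb (fo X))) = comp (frho X) om.
Proof. by exists 0; rewrite /= comp1m comp0r. Qed.

Definition fproj X : FHom (emb (fo X)) X := exist _ (idm (fo X)) (fproj_ok X).

Lemma fproj_cokernel X : is_cokernel (embm (frho X)) (fproj X).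
Proof.
split=> [|Z [g g_ok] [l /=]].
  by exists (idm (fr X)); rewrite /= comp1m subr0 compm1.
rewrite subr0 => g_rho.
have g_desc : exists om : Hom (fr X) (fr Z), comp g (frho X) = comp (frho Z) om.
  by exists l.
exists (exist _ g g_desc); split=> [|[h h_ok] [l' /=]].
  by apply: val_feq; rewrite /= compm1.
by rewrite compm1 => e; exists l'.
Qed.

Definition natural_bifun (F G : fbifun A)
    (al : forall X Y, FHom (E_ob F X Y) (E_ob G X Y)) :=
  forall X X' Y Y' (f : FHom X X') (g : FHom Y Y'),
    feq (fcomp (al X' Y') (E_mor F f g)) (fcomp (E_mor G f g) (al X Y)).

Lemma natural_bifun_eq_emb (F G : fbifun A)
    (al be : forall X Y, FHom (E_ob F X Y) (E_ob G X Y)) :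
  natural_bifun al -> natural_bifun be ->
  (forall X Y, fepi (E_mor F (fproj X) (fproj Y))) ->
  (forall a b : Ob A, feq (al (emb a) (emb b)) (be (emb a) (emb b))) ->
  forall X Y, feq (al X Y) (be X Y).
Proof.
move=> nat_al nat_be epiF al_be X Y; apply: epiF.
by rewrite nat_al al_be -nat_be.
Qed.

Section RightExactBifunctor.
Variable E : fbifun A.
Hypothesis E_bilinear : bilinearF E.
Local Notation "X ⊗ Y" := (E_ob E X Y) (at level 40, left associativity).
Local Notation "f ⊗m g" := (E_mor E f g) (at level 40, left associativity).

#[local] Instance E_mor_proper X X' Y Y' :
  Proper (@feq A X X' ==> @feq A Y Y' ==> @feq A _ _) (@E_mor A E X X' Y Y').
Proof. by move=> f f' ff' g g' gg'; case: E_bilinear => E_feq _; apply: E_feq. Qed.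

Lemma E_mor_comp X X' X'' Y Y' Y'' (f : FHom X X') (f' : FHom X' X'')
    (g : FHom Y Y') (g' : FHom Y' Y'') :
  feq (fcomp f' f ⊗m fcomp g' g) (fcomp (f' ⊗m g') (f ⊗m g)).
Proof. by case: E_bilinear => _ [_ [E_comp _]]; apply: E_comp. Qed.

Lemma E_mor_split X X' Y Y' (f : FHom X X') (g : FHom Y Y') :
  feq (f ⊗m g) (fcomp (f ⊗m fid Y') (fid X ⊗m g)).
Proof. by rewrite -E_mor_comp fcompm1 fcomp1m. Qed.

Hypothesis E_right_exact : right_exactF E.

Lemma E_mor_cokernel_epi X X' C Y Y' D (f : FHom X X') (c : FHom X' C)
    (g : FHom Y Y') (d : FHom Y' D) :
  is_cokernel f c -> is_cokernel g d -> fepi (c ⊗m d).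
Proof.
case: E_right_exact => [re_l re_r] fc gd.
apply: fepi_feq (E_mor_split c d) _.
by apply: fepi_comp; apply: cokernel_epi; [apply: re_l fc | apply: re_r gd].
Qed.

Variable one : fobj A.

Definition tensor_unit_mid : fbifun A :=
  @FBifun A (fun X Y => X ⊗ (one ⊗ Y)) (fun X X' Y Y' f g => f ⊗m (fid one ⊗m g)).

Lemma tensor_unit_mid_fproj_epi X Y :
  fepi (E_mor tensor_unit_mid (fproj X) (fproj Y)).
Proof.
apply: E_mor_cokernel_epi (fproj_cokernel X) _.
by case: E_right_exact => _ re_r; apply/re_r/fproj_cokernel.
Qed.

Lemma triangle_lhs_natural (Assh : ass_type E) (rhoh : rho_type E one) :
  natural_ass Assh -> natural_rho rhoh ->
  @natural_bifun tensor_unit_mid E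
    (fun X Y => fcomp (rhoh X ⊗m fid Y) (Assh X one Y)).
Proof.
move=> nat_ass nat_rho X X' Y Y' f g /=.
rewrite -fcompA nat_ass !fcompA -!E_mor_comp.
by rewrite nat_rho fcomp1m fcompm1.
Qed.

Lemma triangle_rhs_natural (lamh : lam_type E one) :
  natural_lam lamh ->
  @natural_bifun tensor_unit_mid E (fun X Y => fid X ⊗m lamh Y).
Proof.
move=> nat_lam X X' Y Y' f g /=.
by rewrite -!E_mor_comp nat_lam fcomp1m fcompm1.
Qed.

End RightExactBifunctor.
End FreydCategory.

Theorem lemma3p17 (A : addCat) (T : bifunA A) (E : fbifun A)
  (HT : bilinearA T) (HE : is_extension T E)
  (Ass : assA_type E) (HAss : nat_iso_assA Ass)
  (one : fobj A)
  (lam : lamA_type E one) (Hlam : nat_iso_lamA lam)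
  (rho : rhoA_type E one) (Hrho : nat_iso_rhoA rho)
  (Assh : ass_type E) (HAssh : is_ext_ass Ass Assh)
  (lamh : lam_type E one) (Hlamh : is_ext_lam lam lamh)
  (rhoh : rho_type E one) (Hrhoh : is_ext_rho rho rhoh) :
  (forall X Y : fobj A, triangle Assh lamh rhoh X Y) <->
  (forall a b : Ob A, triangle Assh lamh rhoh (emb a) (emb b)).
Proof.
split=> [tri a b | tri]; first exact: tri.
case: HE => E_bilinear [E_right_exact _].
case: HAssh => nat_ass _; case: Hlamh => nat_lam _; case: Hrhoh => nat_rho _.
apply: (natural_bifun_eq_emb (triangle_lhs_natural E_bilinear nat_ass nat_rho)
                             (triangle_rhs_natural E_bilinear nat_lam)) tri.
exact: tensor_unit_mid_fproj_epi.
Qed.
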